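(* Let $k\ge2$ and $c\in\mathcal{S}_k^\beta\setminus\{\mathbf{0}\}$. Then every element of the ideal $\langle\gamma^{\nu(c)+1}\rangle$ appears exactly $q^{\nu(c)}L_\beta(k-1)$ times among the coordinates of $c$, and the remaining $q^{s(k-1)}$ coordinates of $c$ lie in $\langle\gamma^{\nu(c)}\rangle\setminus\langle\gamma^{\nu(c)+1}\rangle$, where $L_\beta(m)=q^{(s-1)(m-1)}\frac{q^m-1}{q-1}$.
   Context: Let $R$ be a finite commutative chain ring with maximal ideal $\langle\gamma\rangle$, nilpotency index $s$ (so $\langle\gamma^s\rangle=\{0\}$) and residue field $R/\langle\gamma\rangle\cong\mathbb{F}_q$. Fix coset representatives $T=\{e_0,\dots,e_{q-1}\}$ with $e_0=0,e_1=1$, ordered $e_0<\dots<e_{q-1}$; each $r\in R$ is uniquely $\sum_{i=0}^{s-1}r_i\gamma^i$, $r_i\in T$; order $R$ by $x>y$ iff $x_i>y_i$ in $T$ for the largest $i$ with $x_i\neq y_i$; list $R=\{\rho_0,\dots,\rho_{q^s-1}\}$ increasingly. $\mathbf{a}^{(m)}$ is the constant vector of length $m$. Define $G_1^\alpha=(\rho_0\ \cdots\ \rho_{q^s-1})$ and, for $k>1$, $G_k^\alpha$ as the matrix of $q^s$ column blocks, the $j$-th having first row $\boldsymbol{\rho_j}^{(q^{s(k-1)})}$ and $G_{k-1}^\alpha$ below. List $\langle\gamma\rangle$ increasingly as $a_0\gamma<\dots<a_{q^{s-1}-1}\gamma$. Define $G_1^\beta=(1)$ and, for $k>1$, $G_k^\beta$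 as the matrix with column blocks: first a block with first row $\mathbf{1}^{(q^{s(k-1)})}$ and $G_{k-1}^\alpha$ below; then for each $j=0,\dots,q^{s-1}-1$ a block with first row the constant vector with entry $a_j\gamma$ and $G_{k-1}^\beta$ below. $\mathcal{S}_k^\beta$ is the $R$-submodule generated by the rows of $G_k^\beta$ (its length is $L_\beta(k)$). Valuation: for $x\in R\setminus\{0\}$, $\nu(x)$ is the largest $m$ with $x=\gamma^m\beta$, $\beta$ a unit; $\nu(0)=\infty$; for $x\in R^n$, $\nu(x)=\min_i\nu(x_i)$. *)

From HB Require Import structures.
From mathcomp Require Import all_boot all_order all_algebra.
Set Implicit Arguments. Unset Strict Implicit. Unset Printing Implicit Defensive.
Import Order.TTheory GRing.Theory.
Local Open Scope ring_scope.

Section ChainRing.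
Variable R : finComUnitRingType.
Variable gamma : R.   (* generator of the maximal ideal *)
Variable s : nat.     (* nilpotency index of gamma *)
Variable e : seq R.   (* the ordered coset representatives e_0 < ... < e_{q-1} *)

(* q = |R / <gamma>| = number of coset representatives *)
Definition qq : nat := size e.

Definition inI (m : nat) (x : R) : bool := [exists y : R, x == gamma ^+ m * y].

Definition coset_reps : Prop :=
  (forall r : R, exists2 i, (i < size e)%N & inI 1 (r - e`_i)) /\
  (forall i j, (i < size e)%N -> (j < size e)%N -> inI 1 (e`_i - e`_j) -> i = j).

(* rho_j : the j-th element of R in increasing order.  The order compares the
   gamma-adic digits (in T) from the highest power down, so the j-th element is
   the one whose digit at gamma^i is e_{d_i}, where d_i is the i-th base-q digit
   of j. *)
Definition rho (j : nat) : R :=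
  \sum_(i < s) e`_((j %/ qq ^ i) %% qq) * gamma ^+ i.

(* a_j gamma : the j-th element of <gamma> in increasing order (the elements of
   <gamma> are those whose digit at gamma^0 is e_0 = 0). *)
Definition agamma (j : nat) : R := rho (qq * j).

(* entries (row i, column j, 0-indexed) of G_k^alpha *)
Fixpoint galpha (k i j : nat) : R :=
  match k with
  | 0 => 0
  | k'.+1 => if i is i'.+1 then galpha k' i' (j %% qq ^ (s * k'))
             else rho (j %/ qq ^ (s * k'))
  end.

(* number of columns of G_k^beta *)
Fixpoint nbeta (k : nat) : nat :=
  match k with
  | 0 => 0
  | k'.+1 => (qq ^ (s * k') + qq ^ s.-1 * nbeta k')%N
  end.

(* entries of G_k^beta: first block [1 ; G_{k-1}^alpha], then for each
   j < q^(s-1) the block [a_j gamma ; G_{k-1}^beta]; G_1^beta = (1). *)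
Fixpoint gbeta (k i j : nat) : R :=
  match k with
  | 0 => 0
  | k'.+1 =>
      if (j < qq ^ (s * k'))%N then
        (if i is i'.+1 then galpha k' i' j else 1)
      else
        let j' := (j - qq ^ (s * k'))%N in
        if i is i'.+1 then gbeta k' i' (j' %% nbeta k')
        else agamma (j' %/ nbeta k')
  end.

Definition Galpha (k : nat) : 'M[R]_(k, qq ^ (s * k)) :=
  \matrix_(i < k, j < qq ^ (s * k)) galpha k i j.

Definition Gbeta (k : nat) : 'M[R]_(k, nbeta k) :=
  \matrix_(i < k, j < nbeta k) gbeta k i j.

Definition in_Sbeta (k : nat) (c : 'rV[R]_(nbeta k)) : Prop :=
  exists u : 'rV[R]_k, c = u *m Gbeta k.

(* valuation of a ring element: largest m with x = gamma^m * (unit).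
   (For x <> 0 such m is < s since gamma^s = 0; for x = 0 the value is
   irrelevant here, nu(0) = infinity being handled at the vector level.) *)
Definition nuR (x : R) : nat :=
  \max_(m < s | [exists b : R, (b \is a GRing.unit) && (x == gamma ^+ m * b)]) m.

(* valuation of a vector: minimum of the valuations of its coordinates
   (zero coordinates have valuation infinity and are skipped; the default s
   is only reached for the zero vector). *)
Definition nuv (n : nat) (c : 'rV[R]_n) : nat :=
  \big[minn/s]_(j < n | c ord0 j != 0) nuR (c ord0 j).

End ChainRing.

Definition Lbeta (q s m : nat) : nat :=
  (q ^ (s.-1 * m.-1) * ((q ^ m - 1) %/ (q - 1)))%N.

(* Write the coefficients of c as gamma^w times a vector u with a unit entry, so that
   c = gamma^w c' with c' = u G_k^beta and nu(c) = w.  By induction on k through the block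
   structure of G_k^alpha and G_k^beta, u G_k^alpha takes every value of R exactly
   q^(s(k-1)) times and u G_k^beta every value of <gamma> exactly L_beta(k-1) times: if the
   unit coefficient is in the first row, the first-row entries of each block run once
   through R (resp. <gamma>) while the rest of the column is fixed; otherwise one recurses
   into the blocks.  Hence c' has q^(s(k-1)) unit coordinates, which are exactly the
   coordinates of c outside <gamma^(w+1)>, and since x in <gamma^(w+1)> equals gamma^w z for
   exactly q^w elements z of <gamma>, x occurs q^w L_beta(k-1) times in c. *)

From HB Require Import structures.
From mathcomp Require Import all_boot all_order all_algebra.
From mathcomp Require Import zify.
Import Order.TTheory GRing.Theory.
Local Open Scope ring_scope.
Set Implicit Arguments. Unset Strict Implicit.

Lemma sum_ord_pred1 N (P : pred nat) n0 : (n0 < N)%N -> P n0 ->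
  (forall n, (n < N)%N -> P n -> n = n0) -> (\sum_(n < N) P n = 1)%N.
Proof.
move=> n0N Pn0 P_n0; rewrite (bigD1 (Ordinal n0N)) //= Pn0 big1 // => n /eqP nn0.
apply/eqP; rewrite eqb0; apply/negP => /(P_n0 _ (ltn_ord n)) nE.
by apply: nn0; apply: val_inj.
Qed.

Lemma big_ord_mul (T : Type) (idx : T) (op : Monoid.law idx) N M (F : nat -> T) :
  \big[op/idx]_(j < N * M) F j = \big[op/idx]_(a < N) \big[op/idx]_(b < M) F (a * M + b)%N.
Proof.
elim: N => [|N IHN]; first by rewrite mul0n !big_ord0.
by rewrite big_ord_recr /= -IHN mulSnr big_split_ord.
Qed.

Lemma addr_eq_subl (T : zmodType) (a b t : T) : (a + b == t) = (b == t - a).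
Proof. by apply/eqP/eqP => [<-|->]; rewrite addrC ?addKr ?subrK. Qed.

Lemma unit_affine_eq (T : comUnitRingType) (u r x t : T) : u \is a GRing.unit ->
  (u * r + x == t) = (r == u^-1 * (t - x)).
Proof.
move=> uU; rewrite addrC addr_eq_subl.
by apply/eqP/eqP => [<-|->]; rewrite ?mulKr ?mulVKr.
Qed.

Lemma sum_bool_card (I : finType) (P : pred I) : (\sum_i P i)%N = #|[set i | P i]|.
Proof. by rewrite -sum1dep_card [RHS]big_mkcond; apply: eq_bigr => i _; case: (P i). Qed.

Section Ideals.
Variables (R : finComUnitRingType) (gamma : R).
Local Notation inI := (inI gamma).

Lemma inIP m x : reflect (exists y, x = gamma ^+ m * y) (inI m x).
Proof. by apply: (iffP existsP) => [[y /eqP ->]|[y ->]]; exists y. Qed.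

Lemma inIX m y : inI m (gamma ^+ m * y).
Proof. by apply/inIP; exists y. Qed.

Lemma inIT x : inI 0 x.
Proof. by rewrite -(mul1r x) -(expr0 gamma) inIX. Qed.

Lemma inI0 m : inI m 0.
Proof. by rewrite -(mulr0 (gamma ^+ m)) inIX. Qed.

Lemma inID m x y : inI m x -> inI m y -> inI m (x + y).
Proof. by move=> /inIP[a ->] /inIP[b ->]; rewrite -mulrDr inIX. Qed.

Lemma inIN m x : inI m x -> inI m (- x).
Proof. by move=> /inIP[a ->]; rewrite -mulrN inIX. Qed.

Lemma inIB m x y : inI m x -> inI m y -> inI m (x - y).
Proof. by move=> hx /inIN; apply: inID. Qed.

Lemma inIMr m x y : inI m x -> inI m (x * y).
Proof. by move=> /inIP[a ->]; rewrite -mulrA inIX. Qed.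

Lemma inIMl m x y : inI m y -> inI m (x * y).
Proof. by rewrite mulrC; apply: inIMr. Qed.

Lemma inI_sum m I (r : seq I) (P : pred I) (F : I -> R) :
  (forall i, P i -> inI m (F i)) -> inI m (\sum_(i <- r | P i) F i).
Proof.
by move=> FI; elim/big_rec: _ => [|i x Pi]; [exact: inI0 | apply: inID; apply: FI].
Qed.

Lemma inI_le m n x : (m <= n)%N -> inI n x -> inI m x.
Proof. by move=> /subnKC <- /inIP[a ->]; rewrite exprD -mulrA inIX. Qed.

End Ideals.

Section ChainRing.
Variables (R : finComUnitRingType) (gamma : R) (s : nat).
Hypothesis gammaXs_eq0 : gamma ^+ s = 0.
Hypothesis gammaXs1_neq0 : gamma ^+ s.-1 != 0.
Hypothesis nonunit_gamma_mul : forall x : R, x \isn't a GRing.unit -> exists y, x = gamma * y.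
Local Notation inI := (inI gamma).

Lemma gamma_nonunit : gamma \isn't a GRing.unit.
Proof. by apply/negP => /(unitrX s); rewrite gammaXs_eq0 unitr0. Qed.

Lemma inI1 x : inI 1 x = (x \isn't a GRing.unit).
Proof.
apply/idP/idP => [/inIP[y ->]|/nonunit_gamma_mul[y ->]]; last by rewrite -[gamma]expr1 inIX.
by rewrite expr1 unitrM negb_and gamma_nonunit.
Qed.

Lemma inI_nil x : inI s x -> x = 0.
Proof. by move=> /inIP[y ->]; rewrite gammaXs_eq0 mul0r. Qed.

Lemma unitrD_nonunit (u x : R) :
  u \is a GRing.unit -> x \isn't a GRing.unit -> u + x \is a GRing.unit.
Proof.
move=> uU xN; apply: contraTT uU; rewrite -!inI1 => uxN.
by rewrite -(addrK x u); apply: inIB => //; rewrite inI1.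
Qed.

Lemma gammaX_neq0 n : (n < s)%N -> gamma ^+ n != 0.
Proof.
move=> ns; apply: contraNneq gammaXs1_neq0 => gn0.
by rewrite -(subnKC (_ : n <= s.-1)%N) ?exprD ?gn0 ?mul0r // -ltnS prednK //; lia.
Qed.

Lemma gammaX_unit_eq0 n b :
  b \is a GRing.unit -> (gamma ^+ n * b == 0) = (s <= n)%N.
Proof.
move=> bU; rewrite (mulIr_eq0 _ (mulIr bU)).
case: leqP => [/subnKC <-|/gammaX_neq0 /negbTE //].
by rewrite exprD gammaXs_eq0 mul0r eqxx.
Qed.

Lemma inI_unit_factor n x :
  inI n x -> ~~ inI n.+1 x -> exists2 b, b \is a GRing.unit & x = gamma ^+ n * b.
Proof.
move=> /inIP[b ->] xN; exists b => //; apply: contraNT xN => /nonunit_gamma_mul[y ->].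
by rewrite mulrA -exprSr inIX.
Qed.

Lemma gammaX_unit_decomp x : x != 0 ->
  exists n b, [/\ (n < s)%N, b \is a GRing.unit & x = gamma ^+ n * b].
Proof.
move=> x0; have xN : exists n, ~~ inI n.+1 x.
  by exists s; apply: contra x0 => /(inI_le (leqnSn s)) /inI_nil ->.
have [n xNn nmin] := ex_minnP xN.
have xIn : inI n x.
  case: n xNn nmin => [|n] _ nmin; first exact: inIT.
  by apply: contraT => /nmin; rewrite ltnn.
have [b bU xE] := inI_unit_factor xIn xNn; exists n, b; split=> //.
by rewrite ltnNge -(gammaX_unit_eq0 n bU) -xE.
Qed.

Lemma gammaX_mul_eq0 m d : (m <= s)%N -> gamma ^+ m * d = 0 -> inI (s - m) d.
Proof.
move=> ms gd0; have [->|/gammaX_unit_decomp[n [b [_ bU dE]]]] := eqVneq d 0.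
  exact: inI0.
move/eqP: gd0; rewrite dE mulrA -exprD gammaX_unit_eq0 // => smn.
by rewrite -(subnKC (_ : s - m <= n)%N) 1?exprD -1?mulrA ?inIX //; lia.
Qed.

Lemma inI_gammaXS n z : (n < s)%N -> inI n.+1 (gamma ^+ n * z) = (z \isn't a GRing.unit).
Proof.
move=> ns; apply/idP/idP => [|/nonunit_gamma_mul[y ->]]; last first.
  by rewrite mulrA -exprSr inIX.
apply: contraTN => zU; apply/inIP => -[y /eqP].
rewrite exprSr -mulrA -subr_eq0 -mulrBr gammaX_unit_eq0; first by rewrite leqNgt ns.
by apply: unitrD_nonunit => //; rewrite -inI1 -mulrN -[gamma]expr1 inIX.
Qed.

Lemma gammaX_unit_inj n m b b' : (n < s)%N -> (m < s)%N ->
  b \is a GRing.unit -> b' \is a GRing.unit ->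
  gamma ^+ n * b = gamma ^+ m * b' -> n = m.
Proof.
wlog nm : n m b b' / (n <= m)%N.
  move=> wlog_nm ns ms bU b'U gE; case: (leqP n m) => [nm|/ltnW mn].
    exact: wlog_nm gE.
  by symmetry; apply: wlog_nm (esym gE).
move=> ns ms bU b'U gE; apply/eqP; rewrite eqn_leq nm leqNgt; apply/negP => nm'.
by move: (inI_gammaXS b ns); rewrite gE bU (inI_le nm') ?inIX.
Qed.

Lemma nuR_gammaX_unit n b :
  (n < s)%N -> b \is a GRing.unit -> nuR gamma s (gamma ^+ n * b) = n.
Proof.
move=> ns bU; apply/eqP; rewrite eqn_leq; apply/andP; split.
  apply/bigmax_leqP => m /existsP[b' /andP[b'U /eqP gE]].
  by rewrite (gammaX_unit_inj ns (ltn_ord m) bU b'U gE).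
by apply: (@leq_bigmax_cond _ _ _ (Ordinal ns)); apply/existsP; exists b; rewrite bU eqxx.
Qed.

Lemma inI_gamma_mulS m x : (m < s)%N -> inI m.+1 (gamma * x) -> inI m x.
Proof.
move=> ms /inIP[y]; rewrite exprS -mulrA => /eqP; rewrite -subr_eq0 -mulrBr.
rewrite -[gamma]expr1 => /eqP /(gammaX_mul_eq0 (leq_ltn_trans (leq0n m) ms)).
move=> /(inI_le (_ : m <= s - 1)%N) xy; rewrite -(subrK (gamma ^+ m * y) x).
by apply: inID; [apply: xy; lia | apply: inIX].
Qed.

Variable e : seq R.
Hypothesis reps_e : coset_reps gamma e.
Hypothesis e0_eq0 : e`_0 = 0.
Hypothesis e1_eq1 : e`_1 = 1.
Local Notation q := (size e).

Lemma size_reps_gt1 : (1 < q)%N.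
Proof.
rewrite ltnNge; apply/negP => /(nth_default 0) e1_eq0.
by move/eqP: e1_eq1; rewrite e1_eq0 eq_sym oner_eq0.
Qed.

Lemma size_reps_gt0 : (0 < q)%N.
Proof. exact: ltn_trans size_reps_gt1. Qed.

(* [rho gamma s e n] and [rho_trunc s n] are convertible. *)
Definition rho_trunc m n := \sum_(i < m) e`_((n %/ q ^ i) %% q) * gamma ^+ i.

Lemma rho_truncS m n : rho_trunc m.+1 n = e`_(n %% q) + gamma * rho_trunc m (n %/ q).
Proof.
rewrite /rho_trunc big_ord_recl /= expn0 divn1 expr0 mulr1 mulr_sumr; congr (_ + _).
by apply: eq_bigr => i _; rewrite /bump /= add1n expnS divnMA exprS mulrCA.
Qed.

Lemma rho_trunc_surj m r : exists2 n, (n < q ^ m)%N & inI m (r - rho_trunc m n).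
Proof.
elim: m r => [|m IHm] r; first by exists 0%N; rewrite ?inIT.
have [i ie /inIP[y]] := reps_e.1 r; rewrite expr1 => rE.
have [n nq /inIP[z yE]] := IHm y; exists (i + q * n)%N.
  rewrite expnS (leq_trans (_ : _ < q * n.+1)%N) //; first by rewrite mulnS ltn_add2r.
  by rewrite leq_mul2l nq orbT.
have q0 := size_reps_gt0.
rewrite rho_truncS addnC mulnC modnMDl modn_small // divnMDl // divn_small // addn0.
by rewrite opprD addrA rE -mulrBr yE mulrA -exprS inIX.
Qed.

Lemma rho_trunc_inj m n n' : (m <= s)%N -> (n < q ^ m)%N -> (n' < q ^ m)%N ->
  inI m (rho_trunc m n - rho_trunc m n') -> n = n'.
Proof.
elim: m n n' => [|m IHm] n n' ms; first by rewrite !ltnS !leqn0 => /eqP -> /eqP ->.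
have q0 := size_reps_gt0.
move=> nq n'q; have [nqq n'qq] : (n %/ q < q ^ m)%N /\ (n' %/ q < q ^ m)%N.
  by rewrite !ltn_divLR // -expnSr.
rewrite !rho_truncS opprD addrACA -mulrBr => dI.
have dE : (n %% q)%N = (n' %% q)%N.
  apply: reps_e.2; rewrite ?ltn_pmod //.
  rewrite -(addrK (gamma * (rho_trunc m (n %/ q) - rho_trunc m (n' %/ q))) (_ - _)).
  by apply: inIB; [exact: inI_le dI | rewrite -[gamma]expr1 inIX].
move: dI; rewrite dE subrr add0r => /(inI_gamma_mulS ms) /(IHm _ _ (ltnW ms) nqq n'qq) dqE.
by rewrite (divn_eq n q) (divn_eq n' q) dqE dE.
Qed.

Lemma count_rho r : (\sum_(n < q ^ s) (rho gamma s e n == r) = 1)%N.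
Proof.
have [n ns /inI_nil /eqP] := rho_trunc_surj s r; rewrite subr_eq0 => /eqP rE.
apply: (sum_ord_pred1 (P := fun n => rho gamma s e n == r) ns); first by rewrite rE.
move=> n' n's /eqP rE'; apply: (rho_trunc_inj (leqnn s)) => //.
by rewrite -rE -rE' subrr inI0.
Qed.

Hypothesis s_gt0 : (0 < s)%N.

Lemma agammaE n : agamma gamma s e n = gamma * rho_trunc s.-1 n.
Proof.
rewrite /agamma /rho -(prednK s_gt0) -/(rho_trunc _ _) rho_truncS /qq.
by rewrite modnMr e0_eq0 add0r mulKn // size_reps_gt0.
Qed.

Lemma agamma_in n : inI 1 (agamma gamma s e n).
Proof. by rewrite agammaE -[gamma]expr1 inIX. Qed.

Lemma count_agamma z :
  (\sum_(n < q ^ s.-1) (agamma gamma s e n == z) = (z \isn't a GRing.unit))%N.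
Proof.
have [zU|/nonunit_gamma_mul[y zE]] := boolP (z \is a GRing.unit).
  apply: big1 => n _; apply/eqP; rewrite eqb0.
  by apply: contraTneq (agamma_in n) => ->; rewrite inI1 zU.
have [n ns /inIP[x yE]] := rho_trunc_surj s.-1 y.
have gamma_rho_eq n' : (agamma gamma s e n' == z) = (gamma * (rho_trunc s.-1 n' - y) == 0).
  by rewrite agammaE mulrBr subr_eq0 zE.
apply: (sum_ord_pred1 (P := fun n => agamma gamma s e n == z) ns).
  by rewrite /= gamma_rho_eq -opprB yE mulrN mulrA -exprS prednK // gammaXs_eq0 mul0r oppr0.
move=> n' n's; rewrite gamma_rho_eq -[gamma]expr1 => /eqP /(gammaX_mul_eq0 s_gt0).
rewrite subn1 => n'yI; apply: (rho_trunc_inj (leq_pred s)) => //.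
have -> : rho_trunc s.-1 n' - rho_trunc s.-1 n =
  (rho_trunc s.-1 n' - y) + (y - rho_trunc s.-1 n) by rewrite addrA subrK.
by apply: inID => //; rewrite yE inIX.
Qed.

Definition alpha_comb k (u : nat -> R) j := \sum_(i < k) u i * galpha gamma s e k i j.
Definition beta_comb k (u : nat -> R) j := \sum_(i < k) u i * gbeta gamma s e k i j.
Definition unimodular k (u : nat -> R) := exists2 i, (i < k)%N & u i \is a GRing.unit.

Lemma unimodular_gt0 k u : unimodular k u -> (0 < k)%N.
Proof. by case=> i ik _; apply: leq_ltn_trans ik. Qed.

Lemma unimodularS k u :
  unimodular k.+1 u -> u 0%N \is a GRing.unit \/ unimodular k (fun i => u i.+1).
Proof. by case=> -[|i] ? uU; [left | right; exists i]. Qed.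

Lemma alpha_comb_block k u a b : (b < q ^ (s * k))%N ->
  alpha_comb k.+1 u (a * q ^ (s * k) + b) =
  u 0%N * rho gamma s e a + alpha_comb k (fun i => u i.+1) b.
Proof.
move=> bQ; have Q_gt0 : (0 < q ^ (s * k))%N by apply: leq_ltn_trans bQ.
rewrite /alpha_comb big_ord_recl /=.
by rewrite divnMDl // modnMDl divn_small // addn0 modn_small.
Qed.

Lemma beta_comb_head k u j : (j < q ^ (s * k))%N ->
  beta_comb k.+1 u j = u 0%N + alpha_comb k (fun i => u i.+1) j.
Proof. by move=> jQ; rewrite /beta_comb big_ord_recl /= jQ mulr1. Qed.

Lemma beta_comb_block k u a b : (b < nbeta s e k)%N ->
  beta_comb k.+1 u (q ^ (s * k) + (a * nbeta s e k + b)) =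
  u 0%N * agamma gamma s e a + beta_comb k (fun i => u i.+1) b.
Proof.
move=> bk; have nbk_gt0 : (0 < nbeta s e k)%N by apply: leq_ltn_trans bk.
rewrite /beta_comb big_ord_recl /= ltnNge leq_addr /= addKn.
by rewrite divnMDl // modnMDl divn_small // addn0 modn_small.
Qed.

Lemma count_alpha_comb k u t : unimodular k u ->
  (\sum_(j < q ^ (s * k)) (alpha_comb k u j == t) = q ^ (s * k.-1))%N.
Proof.
elim: k u t => [|k IHk] u t; first by case.
have Qk_gt0 : (0 < q ^ (s * k))%N by rewrite expn_gt0 size_reps_gt0.
move=> /unimodularS uU; rewrite mulnS expnD.
rewrite (big_ord_mul _ _ _ (fun j => alpha_comb k.+1 u j == t : nat)) /=.
under eq_bigr => a _ do under eq_bigr => b _ do rewrite alpha_comb_block //.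
case: uU => [u0U | u'U].
  rewrite exchange_big /=; transitivity (\sum_(b < q ^ (s * k)) 1)%N.
    apply: eq_bigr => b _; under eq_bigr => a _ do rewrite unit_affine_eq //.
    exact: count_rho.
  by rewrite sum_nat_const card_ord muln1.
under eq_bigr => a _ do under eq_bigr => b _ do rewrite addr_eq_subl.
under eq_bigr => a _ do rewrite IHk //.
by rewrite sum_nat_const card_ord -expnD -mulnS prednK // (unimodular_gt0 u'U).
Qed.

Lemma alpha_comb_in m k u j : (forall i, (i < k)%N -> inI m (u i)) -> inI m (alpha_comb k u j).
Proof. by move=> uI; apply: inI_sum => i _; apply/inIMr/uI. Qed.

Lemma beta_comb_in m k u j : (forall i, (i < k)%N -> inI m (u i)) -> inI m (beta_comb k u j).
Proof. by move=> uI; apply: inI_sum => i _; apply/inIMr/uI. Qed.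

Lemma count_beta_comb k u t : unimodular k u -> inI 1 t ->
  (\sum_(j < nbeta s e k) (beta_comb k u j == t) = nbeta s e k.-1)%N.
Proof.
elim: k u t => [|k IHk] u t uU tI; first by case: uU.
pose u' i := u i.+1.
rewrite [nbeta _ _ k.+1]/= big_split_ord /=.
rewrite (big_ord_mul _ _ _ (fun j => beta_comb k.+1 u (q ^ (s * k) + j) == t : nat)) /=.
under eq_bigr => j _ do rewrite beta_comb_head //.
under [X in (_ + X)%N]eq_bigr => a _ do under eq_bigr => b _ do rewrite beta_comb_block //.
have [/existsP[i u'iU] | /existsPn u'N] := boolP [exists i : 'I_k, u' i \is a GRing.unit].
  have u'U : unimodular k u' by exists i.
  under eq_bigr => j _ do rewrite addr_eq_subl.
  rewrite count_alpha_comb //.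
  under eq_bigr => a _ do under eq_bigr => b _ do rewrite addr_eq_subl.
  under eq_bigr => a _ do rewrite IHk // ?inIB ?inIMl ?agamma_in //.
  by rewrite sum_nat_const card_ord -(prednK (unimodular_gt0 u'U)).
(* Otherwise u 0 is a unit and the other coefficients lie in <gamma>: the first block
   holds only units, and in each column b of the other blocks exactly one a_j gamma
   solves the equation. *)
have u'I i : (i < k)%N -> inI 1 (u' i).
  by move=> ik; rewrite inI1; apply: (u'N (Ordinal ik)).
have u0U : u 0%N \is a GRing.unit.
  by case: (unimodularS uU) => // -[i ik iU]; move: (u'I i ik); rewrite inI1 iU.
rewrite big1 ?add0n => [|j _]; last first.
  apply/eqP; rewrite eqb0; apply: contraTneq tI => <-.
  by rewrite inI1 negbK unitrD_nonunit // -inI1 alpha_comb_in.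
rewrite exchange_big /=; transitivity (\sum_(b < nbeta s e k) 1)%N.
  apply: eq_bigr => b _; under eq_bigr => a _ do rewrite unit_affine_eq //.
  by rewrite count_agamma -inI1 inIMl // inIB // beta_comb_in.
by rewrite sum_nat_const card_ord muln1.
Qed.

Lemma count_units_beta_comb k u : unimodular k u ->
  (\sum_(j < nbeta s e k) (beta_comb k u j \is a GRing.unit) = q ^ (s * k.-1))%N.
Proof.
move=> uU; have k_gt0 := unimodular_gt0 uU.
have nonunitsE : (\sum_(j < nbeta s e k) (beta_comb k u j \isn't a GRing.unit) =
    q ^ s.-1 * nbeta s e k.-1)%N.
  under eq_bigr => j _ do rewrite -count_agamma.
  rewrite exchange_big /=.
  under eq_bigr => a _ do under eq_bigr => j _ do rewrite eq_sym.
  under eq_bigr => a _ do rewrite (count_beta_comb uU (agamma_in a)).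
  by rewrite sum_nat_const card_ord.
have : (\sum_(j < nbeta s e k) (beta_comb k u j \is a GRing.unit) +
    \sum_(j < nbeta s e k) (beta_comb k u j \isn't a GRing.unit) = nbeta s e k)%N.
  rewrite -big_split /=; transitivity (\sum_(j < nbeta s e k) 1)%N.
    by apply: eq_bigr => j _; case: (_ \is a _).
  by rewrite sum_nat_const card_ord muln1.
by rewrite nonunitsE -[in RHS](prednK k_gt0) /= => /addIn.
Qed.

Lemma gammaX_fiber w x : (w < s)%N -> inI w.+1 x ->
  exists T : nat -> R, (forall n, inI 1 (T n)) /\
    forall z, (\sum_(n < q ^ w) (z == T n))%N = (gamma ^+ w * z == x).
Proof.
(* The solutions of gamma^w z = x form the coset gamma y + <gamma^(s-w)>. *)
move=> ws /inIP[y xE]; have ws' := ltnW ws.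
pose T n := gamma * y + gamma ^+ (s - w) * rho_trunc w n.
have TE n : gamma ^+ w * T n = x.
  rewrite mulrDr mulrA -exprSr -xE mulrA -exprD subnKC //.
  by rewrite gammaXs_eq0 mul0r addr0.
exists T; split=> [n|z].
  apply: inID; first by rewrite -[gamma]expr1 inIX.
  apply/inIMr/(inI_le (_ : 1 <= s - w)%N); first by rewrite subn_gt0.
  by rewrite -[X in inI _ X]mulr1 inIX.
have [zE|zN] := eqVneq (gamma ^+ w * z) x; last first.
  by apply: big1 => n _; apply/eqP; rewrite eqb0; apply: contra_neq zN => ->.
have /inIP[y' zyE] : inI (s - w) (z - gamma * y).
  by apply: gammaX_mul_eq0 => //; rewrite mulrBr zE mulrA -exprSr xE subrr.
have [n nw /inIP[y2 y'E]] := rho_trunc_surj w y'.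
apply: (sum_ord_pred1 (P := fun n => z == T n) nw) => /=.
  rewrite -(subrK (gamma * y) z) zyE addrC /T; apply/eqP; congr (_ + _).
  apply/eqP; rewrite -subr_eq0 -mulrBr y'E mulrA -exprD subnK //.
  by rewrite gammaXs_eq0 mul0r.
move=> n' n'w /eqP zE'; apply: (rho_trunc_inj ws') => //.
have : gamma ^+ (s - w) * (rho_trunc w n' - y') = 0.
  by rewrite mulrBr -zyE zE' /T [gamma * y + _]addrC addrK subrr.
move/(gammaX_mul_eq0 (leq_subr w s)); rewrite subKn // => n'yI.
have -> : rho_trunc w n' - rho_trunc w n = (rho_trunc w n' - y') + (y' - rho_trunc w n).
  by rewrite addrA subrK.
by apply: inID => //; rewrite y'E inIX.
Qed.

Lemma nbeta_Lbeta m : (0 < m)%N -> nbeta s e m = Lbeta q s m.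
Proof.
case: m => // m _.
have nbetaE : nbeta s e m.+1 = (q ^ (s.-1 * m) * \sum_(i < m.+1) q ^ i)%N.
  elim: m => [|m IHm]; first by rewrite /= !muln0 big_ord1.
  rewrite -[LHS]/(q ^ (s * m.+1) + q ^ s.-1 * nbeta s e m.+1)%N IHm.
  rewrite [in RHS]big_ord_recr /= mulnA -expnD -mulnS mulnDr -expnD.
  by rewrite [(s.-1 * _ + _)%N]addnC -mulSn prednK // addnC.
rewrite nbetaE /Lbeta; congr (_ * _)%N.
by rewrite subn1 predn_exp subn1 mulKn // -ltnS prednK ?size_reps_gt1 ?size_reps_gt0.
Qed.

Lemma gammaX_common_factor k (u : nat -> R) : (exists2 i, (i < k)%N & u i != 0) ->
  exists w u', [/\ (w < s)%N, unimodular k u'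
                & forall i, (i < k)%N -> u i = gamma ^+ w * u' i].
Proof.
move=> [i0 i0k ui0].
pose P m := (m <= s)%N && [forall i : 'I_k, inI m (u i)].
have P0 : P 0%N by apply/andP; split=> //; apply/forallP => i; apply: inIT.
have Ps m : P m -> (m <= s)%N by case/andP.
have [w Pw wmax] := ex_maxnP (ex_intro P 0%N P0) Ps.
have /andP[_ /forallP uI] := Pw.
have ws : (w < s)%N.
  rewrite ltn_neqAle (Ps _ Pw) andbT.
  apply: contra_neq ui0 => wE; apply: inI_nil; rewrite -wE; exact: (uI (Ordinal i0k)).
have [i1 ui1N] : exists i1 : 'I_k, ~~ inI w.+1 (u i1).
  apply/existsP; apply: contraT; rewrite negb_exists => /forallP uIS.
  have /wmax : P w.+1 by rewrite /P ws; apply/forallP => i; rewrite -[inI _ _]negbK uIS.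
  by rewrite ltnn.
pose u' i := odflt 0 [pick y | u i == gamma ^+ w * y].
have uE i : (i < k)%N -> u i = gamma ^+ w * u' i.
  move=> ik; rewrite /u'; case: pickP => [y /eqP //|noy].
  by have /inIP[y uiE] := uI (Ordinal ik); move: (noy y); rewrite -uiE eqxx.
exists w, u'; split=> //; exists (val i1); first exact: ltn_ord.
by move: ui1N; rewrite (uE _ (ltn_ord i1)) inI_gammaXS // negbK.
Qed.

Lemma in_Sbeta_factor k (c : 'rV[R]_(nbeta s e k)) :
  @in_Sbeta R gamma s e k c -> c != 0 ->
  exists w u, [/\ (w < s)%N, unimodular k u
              & forall j, c ord0 j = gamma ^+ w * beta_comb k u j].
Proof.
case=> v cE c0; pose u i := oapp (v ord0) 0 (insub i : option 'I_k).
have cuE j : c ord0 j = beta_comb k u j.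
  by rewrite cE !mxE; apply: eq_bigr => i _; rewrite /u valK mxE.
have /existsP[i0 ui0] : [exists i : 'I_k, u i != 0].
  apply: contraNT c0 => /existsPn u0; apply/eqP/rowP => j.
  by rewrite cuE mxE /beta_comb big1 // => i _; rewrite (eqP (negPn (u0 i))) mul0r.
have u_nz : exists2 i, (i < k)%N & u i != 0 by exists i0.
have [w [u' [ws u'U uE]]] := gammaX_common_factor u_nz.
exists w, u'; split=> // j; rewrite cuE /beta_comb mulr_sumr.
by apply: eq_bigr => i _; rewrite uE // mulrA.
Qed.

Lemma nuv_gammaX n (c : 'rV[R]_n) w (c' : 'I_n -> R) : (w < s)%N ->
  (forall j, c ord0 j = gamma ^+ w * c' j) -> (exists j, c' j \is a GRing.unit) ->
  nuv gamma s c = w.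
Proof.
move=> ws cE [j0 c'j0U]; apply/eqP; rewrite eqn_leq; apply/andP; split.
  have cj0 : c ord0 j0 != 0 by rewrite cE gammaX_unit_eq0 // -ltnNge.
  have := @bigmin_le_cond _ nat _ s j0 (fun j => c ord0 j != 0)
    (fun j => nuR gamma s (c ord0 j)) cj0.
  by rewrite cE nuR_gammaX_unit.
rewrite /nuv; elim/big_rec: _ => [|j m cj0 wm]; first exact: ltnW.
rewrite leq_min wm andbT.
have [v [b [vs bU cjE]]] := gammaX_unit_decomp cj0.
rewrite cjE nuR_gammaX_unit // leqNgt; apply/negP => vw.
by move: (inI_gammaXS b vs); rewrite bU -cjE cE (inI_le vw) ?inIX.
Qed.

Section Codeword.
Variables (k w : nat) (u : nat -> R) (c : 'rV[R]_(nbeta s e k)).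
Hypothesis ws : (w < s)%N.
Hypothesis uU : unimodular k u.
Hypothesis cE : forall j, c ord0 j = gamma ^+ w * beta_comb k u j.

Lemma nuv_codeword : nuv gamma s c = w.
Proof.
apply: (nuv_gammaX ws cE); apply/existsP; apply: contraT; rewrite negb_exists => /forallP uN.
move: (count_units_beta_comb uU); rewrite big1 => [|j _]; last by rewrite (negbTE (uN j)).
by move/eqP; rewrite eq_sym expn_eq0 eqn0Ngt size_reps_gt0.
Qed.

Lemma card_codeword_eq x : inI w.+1 x ->
  #|[set j | c ord0 j == x]| = (q ^ w * nbeta s e k.-1)%N.
Proof.
move=> /(gammaX_fiber ws)[T [TI TE]]; rewrite -sum_bool_card.
under eq_bigr => j _ do rewrite cE -TE.
rewrite exchange_big /=; under eq_bigr => n _ do rewrite count_beta_comb //.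
by rewrite sum_nat_const card_ord.
Qed.

Lemma card_codeword_notin :
  #|[set j | ~~ inI w.+1 (c ord0 j)]| = (q ^ (s * k.-1))%N.
Proof.
rewrite -sum_bool_card -(count_units_beta_comb uU).
by apply: eq_bigr => j _; rewrite cE inI_gammaXS // negbK.
Qed.

End Codeword.

End ChainRing.

Theorem proposition3p20 (R : finComUnitRingType) (gamma : R) (s : nat) (e : seq R)
  (Hs : (0 < s)%N)
  (Hnil : gamma ^+ s = 0) (Hnil1 : gamma ^+ s.-1 != 0)
  (Hmax : forall x : R, x \isn't a GRing.unit -> exists y : R, x = gamma * y)
  (He : coset_reps gamma e) (He0 : e`_0 = 0) (He1 : e`_1 = 1)
  (k : nat) (Hk : (2 <= k)%N)
  (c : 'rV[R]_(nbeta s e k)) (Hc : @in_Sbeta R gamma s e k c) (Hc0 : c != 0) :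
  let v := nuv gamma s c in
  (forall x : R, inI gamma v.+1 x ->
     #|[set j | c ord0 j == x]| = (size e ^ v * Lbeta (size e) s k.-1)%N)
  /\ #|[set j | ~~ inI gamma v.+1 (c ord0 j)]| = (size e ^ (s * k.-1))%N
  /\ (forall j, ~~ inI gamma v.+1 (c ord0 j) -> inI gamma v (c ord0 j)).
Proof.
have [w [u [ws uU cE]]] := in_Sbeta_factor Hnil Hnil1 Hmax Hc Hc0.
move=> v; rewrite /v (nuv_codeword Hnil Hnil1 Hmax He He0 He1 Hs ws uU cE).
split; [|split].
- move=> x /(card_codeword_eq Hnil Hnil1 Hmax He He0 He1 Hs ws uU cE) ->.
  by rewrite (nbeta_Lbeta He1 Hs) // -ltnS (ltn_predK Hk).
- exact: (card_codeword_notin Hnil Hnil1 Hmax He He0 He1 Hs ws uU cE).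
- by move=> j _; rewrite cE inIX.
Qed.
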